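(* Let $G$ be a connected graph with $|V(G)|\ge 3$ and $L(G)=2l(G)$, and let $V_1(G)$ be as in the context. Then: (1) for any maximum matchings $F_L,F_l$ of $G$ with $\nu(G\setminus F_L)=L(G)$ and $\nu(G\setminus F_l)=l(G)$, we have $(V(F_L)\setminus V(F_l))\cap V_1(G)=\emptyset$; (2) there exist a maximum matching $F_l$ of $G$ with $\nu(G\setminus F_l)=l(G)$ and a maximum matching $F_L$ of $G$ with $\nu(G\setminus F_L)=L(G)$ such that $V_1(G)\subseteq V(F_L\cap F_l)\cup (V(F_l)\setminus V(F_L))$.
   Context: Graphs are finite, undirected, without loops or multiple edges. $\nu(G)$ denotes the maximum size of a matching of $G$; a matching is maximum if it has $\nu(G)$ edges. For $F\subseteq E(G)$, $G\setminus F$ is the graph with vertex set $V(G)$ and edge set $E(G)\setminus F$, and $V(F)$ is the set of vertices incident to some edge of $F$. Define $L(G)=\max\{\nu(G\setminus F): F \text{ a maximum matching of } G\}$ and $l(G)=\min\{\nu(G\setminus F): F \text{ a maximum matching of } G\}$. A triangle is a cycle of length 3. Let $T$ be the set of triangles of $G$ containing at least two vertices of degree two (each vertex of degree two lies in at most one triangle of $T$). From each $t\in T$ choose one vertex $v_t$ of $t$ of degree two, and set $V_1(G)=\{v: \deg_G(v)=1\}\cup\{v_t: t\in T\}$. *)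

(* A finite simple graph on vertex set T (a finType) is given
   by its edge set E : {set {set T}}, every edge being a 2-element vertex set. *)
From mathcomp Require Import all_boot.
Set Implicit Arguments. Unset Strict Implicit. Unset Printing Implicit Defensive.

Section Graphs.
Variable T : finType.
Implicit Types (E F M : {set {set T}}) (v : T).

(* every edge has exactly two endpoints: no loops; sets give no multi-edges *)
Definition simple_graph E : bool := [forall f in E, #|f| == 2].

Definition adj E : rel T := fun x y => [set x; y] \in E.

Definition connected E : bool := [forall x, forall y, connect (adj E) x y].

Definition deg E v : nat := #|[set f in E | v \in f]|.

Definition Vof F : {set T} := cover F.

Definition matching E M : bool := (M \subset E) && trivIset M.

Definition nu E : nat := \max_(M in powerset E | trivIset M) #|M|.

Definition max_matching E M : bool := matching E M && (#|M| == nu E).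

Definition Lnu E : nat := \max_(F | max_matching E F) nu (E :\: F).

(* l(G) = min { nu(G \ F) : F maximum matching }; the set of maximum matchings
   is nonempty and every value is <= #|E|, so #|E| is a neutral start value *)
Definition lnu E : nat := \big[minn/#|E|]_(F | max_matching E F) nu (E :\: F).

Definition triangle E (t : {set T}) : bool :=
  (#|t| == 3) && [forall x in t, forall y in t, (x != y) ==> ([set x; y] \in E)].

Definition Tri2 E : {set {set T}} :=
  [set t | triangle E t && (2 <= #|[set v in t | deg E v == 2]|)].

(* V_1(G) relative to a choice function picking v_t in each t in Tri2 E *)
Definition V1 E (ch : {set T} -> T) : {set T} :=
  [set v | deg E v == 1] :|: [set ch t | t in Tri2 E].

Definition valid_choice E (ch : {set T} -> T) : Prop :=
  forall t, t \in Tri2 E -> (ch t \in t) /\ deg E (ch t) = 2.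

End Graphs.

(* The engine is rigidity in the extremal case nu(G\FL) = 2 nu(G\Fl): every
   maximum matching M of G\FL contains Fl\FL, and M\Fl is a maximum matching
   of G\Fl.  Say that an edge e is dominated by h when every other edge meeting
   e also meets h; then h may be traded for e in a maximum matching.  Rigidity
   forbids an edge outside Fl dominated by an edge of Fl\FL that it meets.

   The vertices of V1 are leaves, and chosen vertices v_t of triangles v_t w b
   in which v_t and w have degree two ("pendant triangles").  Part (1)
   follows because the FL-edge at a vertex of V1 missed by Fl would be such a
   dominated edge.  For Part (2), each bad vertex of V1 is repaired by edge
   exchanges inside its pendant edge or triangle that keep the pair optimal and
   keep good vertices good; induction on the number of bad vertices concludes. *)

From mathcomp Require Import all_boot zify.
Set Implicit Arguments. Unset Strict Implicit. Unset Printing Implicit Defensive.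

Section Extrema.
Variables (I : finType) (P : pred I) (G : I -> nat).

Lemma bigmax_witness i0 : P i0 -> exists2 i, P i & G i = \max_(j | P j) G j.
Proof.
move=> Pi0; case: (arg_maxnP G Pi0) => i Pi iM; exists i => //.
by apply/eqP; rewrite eqn_leq (leq_bigmax_cond i Pi); apply/bigmax_leqP.
Qed.

Lemma bigmin_le d i0 : P i0 -> \big[minn/d]_(i | P i) G i <= G i0.
Proof.
move=> Pi0; rewrite -big_filter.
have : i0 \in [seq i <- index_enum I | P i] by rewrite mem_filter Pi0 mem_index_enum.
elim: [seq i <- index_enum I | P i] => //= j r IH; rewrite in_cons big_cons.
case/predU1P => [->|/IH]; first exact: geq_minl.
by move/(leq_trans _); apply; apply: geq_minr.
Qed.

Lemma bigmin_witness d i0 : P i0 -> (forall i, P i -> G i <= d) ->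
  exists2 i, P i & G i = \big[minn/d]_(j | P j) G j.
Proof.
move=> Pi0 Gd.
have [Hm|//] : \big[minn/d]_(j | P j) G j = d \/
               exists2 i, P i & G i = \big[minn/d]_(j | P j) G j.
  apply: (big_rec (fun m => m = d \/ exists2 i, P i & G i = m)); first by left.
  move=> i m Pi [->|[k Pk <-]]; right; first by exists i => //; apply/esym/minn_idPl/Gd.
  have [Hik|Hki] := leqP (G i) (G k).
    by exists i => //; apply/esym/minn_idPl.
  by exists k => //; apply/esym/minn_idPr/ltnW.
exists i0 => //; apply/eqP; rewrite eqn_leq {1}Hm Gd //= -Hm; exact: bigmin_le.
Qed.

End Extrema.

Section Matchings.
Variable T : finType.
Implicit Types (A B e f g h : {set T}) (E F M N X Y : {set {set T}}) (x : T).

Lemma meetP A B : reflect (exists2 z, z \in A & z \in B) (~~ [disjoint A & B]).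
Proof.
rewrite -setI_eq0; apply: (iffP (set0Pn _)) => [[z]|[z zA zB]].
  by rewrite inE => /andP[]; exists z.
by exists z; rewrite inE zA zB.
Qed.

Lemma VofP F x : reflect (exists2 e, e \in F & x \in e) (x \in Vof F).
Proof. exact: bigcupP. Qed.

Lemma matching_edge_eq F e f x :
  trivIset F -> e \in F -> f \in F -> x \in e -> x \in f -> e = f.
Proof.
move=> /trivIsetP tF eF fF xe xf; case: (eqVneq e f) => // ef.
have : ~~ [disjoint e & f] by apply/meetP; exists x.
by rewrite tF.
Qed.

Lemma trivIset_add F h :
  trivIset F -> (forall f, f \in F -> f != h -> [disjoint f & h]) -> trivIset (h |: F).
Proof.
move=> /trivIsetP tF hF; apply/trivIsetP => A B; rewrite !inE.
case/predU1P => [->|AF]; case/predU1P => [->|BF] //; first by rewrite eqxx.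
- by move=> hB; rewrite disjoint_sym; apply: hF => //; rewrite eq_sym.
- by move=> Ah; apply: hF.
- exact: tF.
Qed.

Lemma matching_le_nu X M : M \subset X -> trivIset M -> #|M| <= nu X.
Proof.
move=> sMX tM; apply: (@leq_bigmax_cond _ (fun M => (M \in powerset X) && trivIset M)).
by rewrite powersetE sMX.
Qed.

Lemma nu_witness X : exists M, [/\ M \subset X, trivIset M & #|M| = nu X].
Proof.
have t0 : trivIset (set0 : {set {set T}}) by apply/trivIsetP => A B; rewrite inE.
have P0 : (set0 \in powerset X) && trivIset (set0 : {set {set T}}).
  by rewrite powersetE sub0set t0.
have [M /andP[]] :=
  @bigmax_witness _ (fun M => (M \in powerset X) && trivIset M) (fun M => #|M|) _ P0.
by rewrite powersetE => sM tM eM; exists M.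
Qed.

Lemma nu_le_card X : nu X <= #|X|.
Proof.
by apply/bigmax_leqP => M /andP[]; rewrite powersetE => sM _; exact: subset_leq_card.
Qed.

Lemma nu_augment X N g : N \subset X -> trivIset N -> g \in X -> g != set0 ->
  (forall f, f \in N -> [disjoint f & g]) -> #|N|.+1 <= nu X.
Proof.
move=> sN tN gX g0 Ng.
have gN : g \notin N.
  by apply: contraTN g0 => /Ng; rewrite -setI_eq0 setIid negbK.
have := matching_le_nu (M := g |: N) (X := X); rewrite cardsU1 gN add1n; apply.
  by rewrite subUset sub1set gX sN.
by apply: trivIset_add => // f fN _; apply: Ng.
Qed.

(* Exchange: if every edge of X other than g that meets h also meets g, then g
   may be traded for h in a maximum matching of X, so nu X <= nu Y. *)
Lemma nu_exchange X Y g h : X :\ g \subset Y -> h \in Y -> h != set0 ->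
  {in X :\ g, forall f, ~~ [disjoint f & h] -> ~~ [disjoint f & g]} -> nu X <= nu Y.
Proof.
move=> sXY hY h0 hg; have [N [sN tN <-]] := nu_witness X.
have sNg : N :\ g \subset Y by apply: subset_trans sXY; exact: setSD.
have [gN|gN] := boolP (g \in N); last first.
  apply: matching_le_nu tN; apply: subset_trans sNg.
  by apply/subsetP => f fN; rewrite in_setD1 fN andbT; apply: contraNneq gN => <-.
have tNg : trivIset (N :\ g) by apply: trivIsetS tN; exact: subsetDl.
have Nh : forall f, f \in N :\ g -> [disjoint f & h].
  move=> f fNg; apply/negPn/negP => /(hg f (subsetP (setSD _ sN) f fNg)).
  by move: fNg; rewrite in_setD1 => /andP[fg fN]; rewrite (trivIsetP tN f g fN gN fg).
by rewrite (cardsD1 g N) gN add1n; apply: nu_augment Nh.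
Qed.

Lemma max_matchingP E F :
  max_matching E F -> [/\ F \subset E, trivIset F & #|F| = nu E].
Proof. by case/andP => /andP[-> ->] /eqP. Qed.

(* The edge e is dominated by h in E when every other edge of E meeting e also
   meets h; then h can be traded for e without creating conflicts. *)
Definition dominated E e h : Prop :=
  forall f, f \in E -> f != e -> ~~ [disjoint f & e] -> ~~ [disjoint f & h].

Lemma dominated_swap E F g e : max_matching E F -> g \in F -> e \in E ->
    e \notin F -> e != set0 -> dominated E e g ->
  max_matching E (e |: (F :\ g)) /\ nu (E :\: (e |: (F :\ g))) <= nu (E :\: F).
Proof.
move=> mF gF eE eF e0 dom; have [sF tF cF] := max_matchingP mF.
have Fe : forall f, f \in F -> f != g -> [disjoint f & e].
  move=> f fF fg; apply/negPn/negP => fe.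
  have fe' : f != e by apply: contraNneq eF => <-.
  by move: (dom f (subsetP sF f fF) fe' fe); rewrite (trivIsetP tF f g fF gF fg).
have eFg : e \notin F :\ g by rewrite in_setD1 (negPf eF) andbF.
split.
  apply/andP; split; [apply/andP; split|].
  - by rewrite subUset sub1set eE; apply: subset_trans sF; exact: subsetDl.
  - apply: trivIset_add; first by apply: trivIsetS tF; exact: subsetDl.
    by move=> f; rewrite in_setD1 => /andP[fg fF] _; apply: Fe.
  - by rewrite cardsU1 eFg -cF (cardsD1 g F) gF.
apply: (nu_exchange (g := g) (h := e)) => //.
- apply/subsetP => f; rewrite !inE negb_or => /andP[fg /andP[/andP[_ fFg] fE]].
  by rewrite fE andbT; apply: contra fFg => fF; rewrite fg.
- by rewrite inE eE eF.
- move=> f; rewrite !inE negb_or => /andP[fg /andP[/andP[fe _] fE]]; exact: dom.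
Qed.

Lemma Vof_local F F' x :
  (forall e, x \in e -> (e \in F') = (e \in F)) -> (x \in Vof F') = (x \in Vof F).
Proof.
by move=> eqF; apply/VofP/VofP => -[e eF xe]; exists e; rewrite // ?eqF // -eqF.
Qed.

Lemma swap_local F g h x e :
  x \notin g -> x \notin h -> x \in e -> (e \in h |: (F :\ g)) = (e \in F).
Proof.
move=> xg xh xe.
have eh : e != h by apply: contraNneq xh => <-.
have eg : e != g by apply: contraNneq xg => <-.
by rewrite !inE (negPf eh) eg.
Qed.

Lemma swap_off (S : {set T}) F g h x e : g \subset S -> h \subset S -> x \notin S ->
  x \in e -> (e \in h |: (F :\ g)) = (e \in F).
Proof.
move=> gS hS xS; apply: swap_local; apply: contraNN xS; exact: subsetP.
Qed.

End Matchings.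

Section SimpleGraph.
Variables (T : finType) (E : {set {set T}}).
Hypothesis sE : simple_graph E.
Implicit Types (e f g h : {set T}) (F : {set {set T}}) (v w x y z : T).

Lemma edge_card2 e : e \in E -> #|e| = 2.
Proof. by move=> eE; move/forall_inP/(_ e eE)/eqP: sE. Qed.

Lemma edge_neq0 e : e \in E -> e != set0.
Proof. by move=> /edge_card2 e2; rewrite -card_gt0 e2. Qed.

Lemma edge_other e x : e \in E -> x \in e -> exists2 y, y != x & e = [set x; y].
Proof.
move=> /edge_card2/eqP/cards2P[a [b [ab ->]]] /set2P[->|->].
  by exists b; rewrite // eq_sym.
by exists a; rewrite // setUC.
Qed.

Lemma pair_inj x y z : y != x -> [set x; y] = [set x; z] -> y = z.
Proof.
move=> yx exy; have /set2P[eyx|//] : y \in [set x; z] by rewrite -exy set22.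
by rewrite eyx eqxx in yx.
Qed.

Lemma pair_neq x y z : y != z -> y != x -> [set x; y] != [set x; z].
Proof. by move=> yz yx; apply: contraNneq yz => /(pair_inj yx)->. Qed.

Lemma deg1_edge v : deg E v = 1 -> exists2 e, e \in E & v \in e.
Proof.
rewrite /deg => /eqP/cards1P[a Ha].
by have := set11 a; rewrite -Ha inE => /andP[]; exists a.
Qed.

Lemma deg1_uniq v e f :
  deg E v = 1 -> e \in E -> v \in e -> f \in E -> v \in f -> e = f.
Proof.
rewrite /deg => /eqP/cards1P[a Ha] eE ve fE vf.
have : e \in [set f in E | v \in f] by rewrite inE eE ve.
have : f \in [set f in E | v \in f] by rewrite inE fE vf.
by rewrite Ha => /set1P-> /set1P->.
Qed.

Lemma deg2_cases v e1 e2 : deg E v = 2 -> e1 \in E -> v \in e1 -> e2 \in E ->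
  v \in e2 -> e1 != e2 -> forall e, e \in E -> v \in e -> e = e1 \/ e = e2.
Proof.
rewrite /deg => c2 e1E v1 e2E v2 e12 e eE ve.
set S := [set f in E | v \in f] in c2.
have S2 : e2 \in S :\ e1 by rewrite !inE e2E v2 eq_sym e12.
have /cards1P[a Ha] : #|S :\ e1| == 1.
  by move: c2; rewrite (cardsD1 e1 S) inE e1E v1 add1n => -[->].
have [|ne1] := eqVneq e e1; [by left | right].
have : e \in S :\ e1 by rewrite !inE ne1 eE ve.
by move: S2; rewrite Ha => /set1P-> /set1P->.
Qed.

Definition two_edges x y z : Prop :=
  [/\ [set x; y] \in E, [set x; z] \in E &
      forall e, e \in E -> x \in e -> e = [set x; y] \/ e = [set x; z]].

Lemma deg2_two_edges x y z : deg E x = 2 -> y != x -> y != z ->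
  [set x; y] \in E -> [set x; z] \in E -> two_edges x y z.
Proof.
move=> dx yx yz Exy Exz; split => //.
by apply: deg2_cases; rewrite ?set21 ?pair_neq.
Qed.

Lemma dominatedP x y h : y \in h ->
    (forall f, f \in E -> f != [set x; y] -> x \in f -> ~~ [disjoint f & h]) ->
  dominated E [set x; y] h.
Proof.
move=> yh Hx f fE fxy /meetP[z zf /set2P[ez|ez]]; subst z; first exact: Hx.
by apply/meetP; exists y.
Qed.

Lemma max_matching_cover F x y :
  max_matching E F -> [set x; y] \in E -> x \notin Vof F -> y \in Vof F.
Proof.
move=> mF Exy xF; apply/negPn/negP => yF; have [sF tF cF] := max_matchingP mF.
suff : #|F|.+1 <= nu E by rewrite cF ltnn.
apply: nu_augment (edge_neq0 Exy) _ => // f fF; apply/negPn/negP => /meetP[z zf].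
by case/set2P => ez; subst z; [move/negP: xF | move/negP: yF]; apply; apply/VofP; exists f.
Qed.

End SimpleGraph.

Lemma bounded_halves a b n : a <= n -> b <= n -> a + b = 2 * n -> a = n /\ b = n.
Proof. lia. Qed.

Lemma cardsD_sym (T : finType) (A B : {set T}) : #|A| = #|B| -> #|A :\: B| = #|B :\: A|.
Proof.
move=> eAB; have := cardsID B A; have := cardsID A B; rewrite setIC eAB.
lia.
Qed.

Section Rigidity.
Variables (T : finType) (E FL Fl : {set {set T}}).
Hypotheses (sE : simple_graph E) (mL : max_matching E FL) (ml : max_matching E Fl)
  (hLl : nu (E :\: FL) = 2 * nu (E :\: Fl)).
Implicit Types (e f h : {set T}) (M : {set {set T}}).

(* Indeed both halves of
   #|M| = #|M :&: Fl| + #|M :\: Fl| are bounded by nu (G \ Fl). *)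
Lemma rigid_matching M : M \subset E :\: FL -> trivIset M -> #|M| = nu (E :\: FL) ->
  Fl :\: FL \subset M /\ #|M :\: Fl| = nu (E :\: Fl).
Proof.
have [sFL tFL cFL] := max_matchingP mL; have [_ _ cFl] := max_matchingP ml.
move=> sM tM cM.
have ME f : f \in M -> f \in E by move/(subsetP sM); rewrite inE => /andP[].
have MFl : #|M :\: Fl| <= nu (E :\: Fl).
  apply: matching_le_nu (trivIsetD _ tM).
  by apply/subsetP => f; rewrite !inE => /andP[-> /ME->].
have FlFL : #|Fl :\: FL| <= nu (E :\: Fl).
  rewrite (cardsD_sym (etrans cFl (esym cFL))).
  apply: matching_le_nu (trivIsetD _ tFL).
  by apply/subsetP => f; rewrite !inE => /andP[-> /(subsetP sFL)->].
have sMI : M :&: Fl \subset Fl :\: FL.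
  apply/subsetP => f; rewrite !inE => /andP[fM ->].
  by move/(subsetP sM): fM; rewrite inE => /andP[->].
have sum : #|M :&: Fl| + #|M :\: Fl| = 2 * nu (E :\: Fl) by rewrite cardsID cM hLl.
have [eMI eMD] := bounded_halves (leq_trans (subset_leq_card sMI) FlFL) MFl sum.
split => //; have -> : Fl :\: FL = M :&: Fl.
  by apply/esym/eqP; rewrite eqEcard sMI eMI.
exact: subsetIl.
Qed.

(* Consequently no edge e outside Fl is dominated by an edge of Fl \ FL that
   it meets: a maximum matching M of G \ FL would have to use e's dominating
   edge, yet M \ Fl must meet e. *)
Lemma no_dominating_edge e h : e \in E -> e \notin Fl -> h \in Fl -> h \notin FL ->
  ~~ [disjoint e & h] -> dominated E e h -> False.
Proof.
move=> eE eFl hFl hFL eh dom.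
have [M [sM tM cM]] := nu_witness (E :\: FL).
have [sFlM cMl] := rigid_matching sM tM cM.
have ME f : f \in M -> f \in E by move/(subsetP sM); rewrite inE => /andP[].
have hM : h \in M by apply: (subsetP sFlM); rewrite inE hFL hFl.
have [f fMl fe] : exists2 f, f \in M :\: Fl & ~~ [disjoint f & e].
  apply/exists_inP; apply: contraT => /exists_inPn Md.
  have := nu_augment (X := E :\: Fl) _ (trivIsetD _ tM) _ (edge_neq0 sE eE)
    (fun f fM => negbNE (Md f fM)).
  rewrite cMl ltnn; apply.
    by apply/subsetP => f; rewrite !inE => /andP[-> /ME->].
  by rewrite inE eFl eE.
move: fMl; rewrite inE => /andP[fFl fM].
have /meetP[z zf zh] : ~~ [disjoint f & h].
  have [->//|fe'] := eqVneq f e; exact: dom (ME f fM) fe' fe.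
by move: fFl; rewrite (matching_edge_eq tM fM hM zf zh) hFl.
Qed.

Lemma no_dominating_edge_FL e h : e \in FL -> e \notin Fl -> h \in Fl ->
  ~~ [disjoint e & h] -> dominated E e h -> False.
Proof.
have [sFL tFL _] := max_matchingP mL.
move=> eFL eFl hFl eh; apply: no_dominating_edge => //; first exact: (subsetP sFL).
apply: contraNN eFl => hFL; case/meetP: eh => z ze zh.
by rewrite (matching_edge_eq tFL eFL hFL ze zh).
Qed.

End Rigidity.

Lemma card3_split (T : finType) (t : {set T}) x : #|t| = 3 -> x \in t ->
  exists y z, [/\ y != x, z != x, y != z & t = [set x; y; z]].
Proof.
move=> t3 xt; have /cards2P[y [z [yz tx]]] : #|t :\ x| == 2.
  by move: t3; rewrite (cardsD1 x t) xt add1n => -[->].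
have : y \in t :\ x by rewrite tx set21.
have : z \in t :\ x by rewrite tx set22.
rewrite !in_setD1 => /andP[zx _] /andP[yx _]; exists y, z; split => //.
by rewrite -(setD1K xt) tx setUA.
Qed.

Section Triangles.
Variables (T : finType) (E : {set {set T}}).
Implicit Types (t : {set T}) (v w x y z : T).

Lemma triangle_card t : triangle E t -> #|t| = 3.
Proof. by case/andP => /eqP. Qed.

Lemma triangle_edge t x y : triangle E t -> x \in t -> y \in t -> x != y -> [set x; y] \in E.
Proof.
by case/andP => _ /forall_inP tE xt yt xy; move/forall_inP/(_ y yt)/implyP: (tE x xt); apply.
Qed.

Lemma triangle_not_leaf t x : triangle E t -> x \in t -> deg E x != 1.
Proof.
move=> tri xt; apply/eqP => d1.
have [y [z [yx zx yz et]]] := card3_split (triangle_card tri) xt.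
have yt : y \in t by rewrite et !inE eqxx orbT.
have zt : z \in t by rewrite et !inE eqxx !orbT.
have Exy : [set x; y] \in E by apply: (triangle_edge tri); rewrite // eq_sym.
have Exz : [set x; z] \in E by apply: (triangle_edge tri); rewrite // eq_sym.
by move/eqP: (pair_neq yz yx); rewrite (deg1_uniq d1 Exy (set21 _ _) Exz (set21 _ _)).
Qed.

Lemma triangle_deg2_nbr t x y : triangle E t -> x \in t -> deg E x = 2 ->
  [set x; y] \in E -> y != x -> y \in t.
Proof.
move=> tri xt dx Exy yx.
have [a [b [ax bx ab et]]] := card3_split (triangle_card tri) xt.
have a_t : a \in t by rewrite et !inE eqxx orbT.
have bt : b \in t by rewrite et !inE eqxx !orbT.
have Exa : [set x; a] \in E by apply: (triangle_edge tri); rewrite // eq_sym.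
have Exb : [set x; b] \in E by apply: (triangle_edge tri); rewrite // eq_sym.
by case: (deg2_cases dx Exa (set21 _ _) Exb (set21 _ _) (pair_neq ab ax) Exy (set21 _ _));
  move/(pair_inj yx)->.
Qed.

Lemma deg2_triangle_uniq t t' x : triangle E t -> triangle E t' ->
  x \in t -> x \in t' -> deg E x = 2 -> t = t'.
Proof.
move=> tri tri' xt xt' dx; apply/esym/eqP.
rewrite eqEcard (triangle_card tri) (triangle_card tri') leqnn andbT.
apply/subsetP => y yt'; have [->//|yx] := eqVneq y x.
have Exy : [set x; y] \in E by apply: (triangle_edge tri'); rewrite // eq_sym.
exact: triangle_deg2_nbr tri xt dx Exy yx.
Qed.

End Triangles.

Section PendantTriangles.
Variables (T : finType) (E : {set {set T}}).
Hypothesis sE : simple_graph E.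
Implicit Types (e f : {set T}) (F : {set {set T}}) (v w b x : T).

(* v and w are adjacent vertices of degree two with common neighbour b: the
   triangle vwb is attached to the rest of the graph at b only. *)
Definition pendant_triangle v w b : Prop :=
  [/\ v != w, v != b, w != b, two_edges E v w b & two_edges E w v b].

Lemma pendant_triangle_sym v w b : pendant_triangle v w b -> pendant_triangle w v b.
Proof. by move=> [vw vb wb tv tw]; split; rewrite // eq_sym. Qed.

Lemma pendant_meet_opposite v w b f : pendant_triangle v w b -> f \in E -> v \in f ->
  ~~ [disjoint f & [set w; b]].
Proof.
move=> [_ _ _ [_ _ Hv] _] fE vf; apply/meetP.
by case: (Hv f fE vf) => ->; [exists w | exists b]; rewrite !inE eqxx ?orbT.
Qed.

Lemma pendant_dominated v w b e : pendant_triangle v w b -> e \in E -> v \in e ->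
  dominated E e [set w; b].
Proof.
move=> pt eE ve; have [_ _ _ [_ _ Hv] _] := pt.
have [y yv eyv] := edge_other sE eE ve.
have y_wb : y \in [set w; b].
  by case: (Hv e eE ve); rewrite eyv => /(pair_inj yv)->; rewrite ?set21 ?set22.
rewrite eyv; apply: dominatedP y_wb _ => f fE _ vf.
exact: pendant_meet_opposite pt fE vf.
Qed.

Lemma pendant_rotate F v w b : pendant_triangle v w b -> max_matching E F ->
    [set v; b] \in F ->
  max_matching E ([set w; b] |: (F :\ [set v; b])) /\
  nu (E :\: ([set w; b] |: (F :\ [set v; b]))) = nu (E :\: F).
Proof.
move=> pt mF vbF; have [_ tF _] := max_matchingP mF.
have [vw _ wb [_ Evb _] [_ Ewb _]] := pt.
have wbvb : [set w; b] != [set v; b].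
  by rewrite [[set w; b]]setUC [[set v; b]]setUC pair_neq // eq_sym.
have wbF : [set w; b] \notin F.
  by apply: contraNN wbvb => wbF; rewrite (matching_edge_eq tF wbF vbF (set22 _ _) (set22 _ _)).
set F' := [set w; b] |: (F :\ [set v; b]).
have [mF' le'] := dominated_swap mF vbF Ewb wbF (edge_neq0 sE Ewb)
  (pendant_dominated (pendant_triangle_sym pt) Ewb (set21 _ _)).
have vbF' : [set v; b] \notin F' by rewrite !inE eq_sym (negPf wbvb) eqxx.
have [_ ge'] := dominated_swap mF' (setU11 _ _) Evb vbF' (edge_neq0 sE Evb)
  (pendant_dominated pt Evb (set21 _ _)).
have back : [set v; b] |: (F' :\ [set w; b]) = F.
  by rewrite /F' setU1K ?setD1K // in_setD1 (negPf wbF) andbF.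
by rewrite back in ge'; split => //; apply/eqP; rewrite eqn_leq le' ge'.
Qed.

End PendantTriangles.

Section V1Vertices.
Variables (T : finType) (E : {set {set T}}) (ch : {set T} -> T).
Hypotheses (sE : simple_graph E) (vc : valid_choice E ch).
Implicit Types (e f g h t : {set T}) (F FL Fl : {set {set T}}) (v u w b x : T).

Lemma V1_cases x : x \in V1 E ch -> deg E x = 1 \/ exists2 t, t \in Tri2 E & x = ch t.
Proof.
by rewrite !inE => /orP[/eqP|/imsetP]; [left | right].
Qed.

Lemma Tri2_triangle t : t \in Tri2 E -> triangle E t.
Proof. by rewrite inE => /andP[]. Qed.

Lemma Tri2_shape t : t \in Tri2 E ->
  exists w b, [/\ t = [set ch t; w; b], deg E w = 2 & pendant_triangle E (ch t) w b].
Proof.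
move=> tT; have [vt dv] := vc tT; have tri := Tri2_triangle tT.
set v := ch t in vt dv *.
have [y [z [yv zv yz et]]] := card3_split (triangle_card tri) vt.
have [w [b [wv bv wb dw etw]]] : exists w b,
    [/\ w != v, b != v, w != b, deg E w = 2 & t = [set v; w; b]].
  have [dy|dy] := eqVneq (deg E y) 2; first by exists y, z.
  have [dz|dz] := eqVneq (deg E z) 2.
    exists z, y; split => //; first by rewrite eq_sym.
    by rewrite et setUAC.
  exfalso; move: tT; rewrite inE => /andP[_]; apply/negP; rewrite -ltnNge ltnS.
  apply: (@leq_trans #|[set v]|); last by rewrite cards1.
  apply: subset_leq_card; apply/subsetP => x.
  by rewrite !inE et !inE => /andP[/orP[/orP[//|/eqP->]|/eqP->]]; rewrite ?(negPf dy) ?(negPf dz).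
have wt : w \in t by rewrite etw !inE eqxx orbT.
have bt : b \in t by rewrite etw !inE eqxx orbT.
have Et p q : p \in t -> q \in t -> q != p -> [set p; q] \in E.
  by move=> p_t q_t qp; apply: (triangle_edge tri); rewrite // eq_sym.
have vw : v != w by rewrite eq_sym.
have vb : v != b by rewrite eq_sym.
have bw : b != w by rewrite eq_sym.
exists w, b; split => //; split => //.
  by apply: deg2_two_edges => //; apply: Et.
by apply: deg2_two_edges => //; apply: Et.
Qed.

(* A neighbour u of a leaf v that has a second edge g is not in V1: it is not a
   leaf, and a triangle through u (of degree two) would contain the leaf v. *)
Lemma leaf_nbr_notin_V1 v u g : deg E v = 1 -> [set v; u] \in E -> u != v ->
  g \in E -> u \in g -> g != [set v; u] -> u \notin V1 E ch.
Proof.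
move=> dv Evu uv gE ug gvu; apply/negP => /V1_cases[du|[t tT eu]].
  by rewrite (deg1_uniq du gE ug Evu (set22 _ _)) eqxx in gvu.
have [ut du] := vc tT; rewrite -eu in ut du.
have Euv : [set u; v] \in E by rewrite setUC.
have vu : v != u by rewrite eq_sym.
have vt := triangle_deg2_nbr (Tri2_triangle tT) ut du Euv vu.
by move: (triangle_not_leaf (Tri2_triangle tT) vt); rewrite dv.
Qed.

(* The second degree-two vertex w of a triangle of Tri2 is not in V1: it is not
   a leaf, and the only triangle through w is t itself, whose chosen vertex is not w. *)
Lemma Tri2_twin_notin_V1 t w b : t \in Tri2 E -> t = [set ch t; w; b] ->
  deg E w = 2 -> w != ch t -> w \notin V1 E ch.
Proof.
move=> tT et dw wv; apply/negP => /V1_cases[|[t' t'T ew]]; first by rewrite dw.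
have [wt' _] := vc t'T; rewrite -ew in wt'.
have wt : w \in t by rewrite et !inE eqxx orbT.
have ett' := deg2_triangle_uniq (Tri2_triangle tT) (Tri2_triangle t'T) wt wt' dw.
by move: wv; rewrite ett' -ew eqxx.
Qed.

(* Otherwise the FL-edge e at x would be dominated by an
   Fl-edge meeting it: the Fl-edge at the other end of e if x is a leaf, the
   opposite side wb of the triangle if x = v_t. *)
Lemma V1_covered FL Fl x : max_matching E FL -> max_matching E Fl ->
    nu (E :\: FL) = 2 * nu (E :\: Fl) ->
  x \in V1 E ch -> x \in Vof FL -> x \in Vof Fl.
Proof.
move=> mL ml hLl xV1 /VofP[e eFL xe]; apply/negPn/negP => xFl.
have [sFL _ _] := max_matchingP mL; have [sFl _ _] := max_matchingP ml.
have eE := subsetP sFL e eFL.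
have eFl : e \notin Fl by apply: contra xFl => eFl; apply/VofP; exists e.
have block := no_dominating_edge_FL sE mL ml hLl eFL eFl.
case/V1_cases: xV1 => [dx|[t tT ext]].
  have [u ux exu] := edge_other sE eE xe; rewrite exu in eE.
  have /VofP[h hFl uh] := max_matching_cover sE ml eE xFl.
  apply: (block h hFl); first by apply/meetP; exists u; rewrite ?exu ?set22.
  rewrite exu; apply: dominatedP uh _ => f fE fxu xf.
  by rewrite (deg1_uniq dx fE xf eE (set21 _ _)) eqxx in fxu.
have [w [b [_ _ pt]]] := Tri2_shape tT; rewrite -ext in pt.
have [_ _ _ [Exw _ _] [_ _ Hw]] := pt.
have /VofP[h hFl wh] := max_matching_cover sE ml Exw xFl.
have [ehw|ehb] := Hw h (subsetP sFl h hFl) wh.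
  by move/negP: xFl; apply; apply/VofP; exists h; rewrite // ehw set22.
rewrite ehb in hFl; apply: (block _ hFl); first exact: pendant_meet_opposite pt eE xe.
exact: pendant_dominated pt eE xe.
Qed.

End V1Vertices.

(* Two-element sets inside a set of at most three elements pairwise meet, so a
   pairwise disjoint family of them has at most one member. *)
Lemma trivIset_small (T : finType) (S : {set T}) (M : {set {set T}}) :
  #|S| <= 3 -> (forall e, e \in M -> #|e| = 2 /\ e \subset S) -> trivIset M ->
  #|M| <= 1.
Proof.
move=> S3 HM /trivIsetP tM; apply/card_le1_eqP => e f eM fM.
apply/eqP; apply: contraT => ef; have /disjoint_setI0 eIf := tM f e fM eM ef.
have [[e2 eS] [f2 fS]] := (HM e eM, HM f fM).
have := cardsUI f e; rewrite eIf cards0 e2 f2 addn0.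
have : #|f :|: e| <= #|S| by apply: subset_leq_card; rewrite subUset eS fS.
lia.
Qed.

Section Extremal.
Variables (T : finType) (E : {set {set T}}) (ch : {set T} -> T).
Hypotheses (sE : simple_graph E) (vc : valid_choice E ch) (conn : connected E)
  (hL : Lnu E = 2 * lnu E).
Implicit Types (e f g h t : {set T}) (F M FL Fl : {set {set T}}) (v u w b x : T).

Definition optimal_pair FL Fl : Prop := [/\ max_matching E FL, nu (E :\: FL) = Lnu E,
  max_matching E Fl & nu (E :\: Fl) = lnu E].

Lemma optimal_pair_exists : exists FL Fl, optimal_pair FL Fl.
Proof.
have [M0 [s0 t0 c0]] := nu_witness E.
have m0 : max_matching E M0 by rewrite /max_matching /matching s0 t0 c0 eqxx.
have [FL mL eL] := bigmax_witness (fun F => nu (E :\: F)) m0.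
have bnd F : max_matching E F -> nu (E :\: F) <= #|E|.
  by move=> _; apply: leq_trans (nu_le_card _) _; apply/subset_leq_card/subsetDl.
have [Fl ml el] := bigmin_witness m0 bnd.
by exists FL, Fl; split.
Qed.

Lemma optimal_pair_rigid FL Fl : optimal_pair FL Fl -> nu (E :\: FL) = 2 * nu (E :\: Fl).
Proof. by case=> _ -> _ ->. Qed.

Lemma lnu_le F : max_matching E F -> lnu E <= nu (E :\: F).
Proof. exact: bigmin_le. Qed.

(* If b also has degree two, the pendant triangle vwb is closed under
   adjacency, so by connectivity it contains every edge. *)
Lemma closed_triangle_edges v w b : pendant_triangle E v w b -> two_edges E b v w ->
  forall e, e \in E -> e \subset [set v; w; b].
Proof.
move=> [_ _ _ [_ _ Hv] [_ _ Hw]] [_ _ Hb]; set S := [set v; w; b].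
have pairS y z : y \in S -> z \in S -> [set y; z] \subset S.
  by move=> yS zS; rewrite subUset !sub1set yS zS.
have [vS wS bS] : [/\ v \in S, w \in S & b \in S] by rewrite !inE !eqxx !orbT.
have edgeS e z : e \in E -> z \in e -> z \in S -> e \subset S.
  move=> eE ze; rewrite !inE => /orP[/orP[]|] /eqP ez; subst z;
    [case: (Hv e eE ze) | case: (Hw e eE ze) | case: (Hb e eE ze)] => ->;
    exact: pairS.
have clS : closed (adj E) S.
  move=> y z Eyz; apply/idP/idP => [yS|zS].
    by apply: (subsetP (edgeS _ y Eyz (set21 _ _) yS)); rewrite set22.
  by apply: (subsetP (edgeS _ z Eyz (set22 _ _) zS)); rewrite set21.
have allS z : z \in S.
  by rewrite -(closed_connect clS (forallP (forallP conn v) z)).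
move=> e eE; have /set0Pn[z ze] := edge_neq0 sE eE; exact: edgeS eE ze (allS z).
Qed.

(* The common neighbour b of a pendant triangle vwb is not in V1: it is not a
   leaf, and if it had degree two the triangle would be all of G, where L(G) = 0
   is impossible since some edge avoids the single edge of a matching. *)
Lemma pendant_base_notin_V1 v w b : pendant_triangle E v w b -> b \notin V1 E ch.
Proof.
move=> pt; have [vw vb wb [Evw Evb _] [_ Ewb _]] := pt.
have Ebv : [set b; v] \in E by rewrite setUC.
have Ebw : [set b; w] \in E by rewrite setUC.
have vwb : [set v; w] != [set v; b] by rewrite pair_neq // eq_sym.
apply/negP => /V1_cases[db|[t tT ebt]].
  have := pair_inj vb (deg1_uniq db Ebv (set21 _ _) Ebw (set21 _ _)).
  by move/eqP; rewrite (negPf vw).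
have [_ db] := vc tT; rewrite -ebt in db.
have tb : two_edges E b v w by apply: deg2_two_edges; rewrite // eq_sym.
have small (X : {set {set T}}) : X \subset E -> trivIset X -> #|X| <= 1.
  move=> sX; apply: (trivIset_small (S := [set v; w; b])).
    by rewrite -setUA cardsU1 cards2; case: (_ \notin _); case: (_ != _).
  move=> e /(subsetP sX) eE; split; first by rewrite (edge_card2 sE eE).
  exact: closed_triangle_edges pt tb e eE.
have [FL [Fl [mL eL _ _]]] := optimal_pair_exists.
have [sFL tFL _] := max_matchingP mL.
have nuL : nu (E :\: FL) <= 1.
  have [N [sN tN <-]] := nu_witness (E :\: FL).
  exact: small N (subset_trans sN (subsetDl _ _)) tN.
have [e eE eFL] : exists2 e, e \in E & e \notin FL.
  have [vwFL|] := boolP ([set v; w] \in FL); last by exists [set v; w].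
  exists [set v; b] => //; apply: contraNN vwb => vbFL.
  by rewrite (matching_edge_eq tFL vwFL vbFL (set21 _ _) (set21 _ _)).
have := matching_le_nu (X := E :\: FL) (M := [set e]).
rewrite cards1 sub1set inE eE eFL trivIset1 => /(_ isT isT).
move: nuL; rewrite eL hL => le1 ge1; clear -le1 ge1; lia.
Qed.

Definition good FL Fl x : bool := x \in Vof (FL :&: Fl) :|: (Vof Fl :\: Vof FL).

Definition agree_off (S : {set T}) FL Fl FL' Fl' : Prop :=
  forall x e, x \notin S -> x \in e -> (e \in FL') = (e \in FL) /\ (e \in Fl') = (e \in Fl).

Definition repairs FL Fl v FL' Fl' : Prop := [/\ optimal_pair FL' Fl', good FL' Fl' v &
  {in V1 E ch, forall x, good FL Fl x -> good FL' Fl' x}].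

Lemma good_local FL Fl FL' Fl' x :
    (forall e, x \in e -> (e \in FL') = (e \in FL) /\ (e \in Fl') = (e \in Fl)) ->
  good FL' Fl' x = good FL Fl x.
Proof.
move=> eqF; rewrite /good !in_setU !in_setD (@Vof_local _ FL FL')
  ?(@Vof_local _ Fl Fl') ?(@Vof_local _ (FL :&: Fl) (FL' :&: Fl')) //;
  by move=> e /eqF[eL el]; rewrite ?inE ?eL ?el.
Qed.

Lemma repairs_local (S : {set T}) FL Fl FL' Fl' v : optimal_pair FL' Fl' -> good FL' Fl' v ->
    ~~ good FL Fl v -> {in V1 E ch, forall x, x \in S -> x = v} ->
  agree_off S FL Fl FL' Fl' -> repairs FL Fl v FL' Fl'.
Proof.
move=> opt gv bad S1 agr; split => // x xV1 gx.
have xS : x \notin S by apply/negP => /(S1 x xV1) exv; rewrite -exv gx in bad.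
by rewrite (good_local (fun e => agr x e xS)).
Qed.

(* A leaf that is covered by Fl is good, since its only edge is either common to
   FL and Fl or absent from FL. *)
Lemma bad_leaf_uncovered FL Fl v : max_matching E FL -> max_matching E Fl ->
  deg E v = 1 -> ~~ good FL Fl v -> v \notin Vof Fl.
Proof.
move=> mL ml dv; have [sFL _ _] := max_matchingP mL; have [sFl _ _] := max_matchingP ml.
apply: contraNN => /VofP[f fFl vf]; rewrite /good in_setU in_setD.
have [fFL|fFL] := boolP (f \in FL).
  by apply/orP; left; apply/VofP; exists f; rewrite // inE fFL.
apply/orP; right; apply/andP; split; last by apply/VofP; exists f.
apply/negP => /VofP[f' f'FL vf'].
by move: fFL; rewrite -(deg1_uniq dv (subsetP sFL f' f'FL) vf' (subsetP sFl f fFl) vf) f'FL.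
Qed.

(* Repairing a bad leaf v with edge vu: the Fl-edge g at u lies in FL (it
   dominates vu), and trading g for vu in Fl keeps the pair optimal and makes
   v covered by Fl only. *)
Lemma leaf_repair FL Fl v : optimal_pair FL Fl -> deg E v = 1 -> ~~ good FL Fl v ->
  exists FL' Fl', repairs FL Fl v FL' Fl'.
Proof.
move=> opt dv bad; have [mL eL ml el] := opt; have hLl := optimal_pair_rigid opt.
have [sFL tFL _] := max_matchingP mL; have [sFl tFl _] := max_matchingP ml.
have [e eE ve] := deg1_edge dv; have [u uv evu] := edge_other sE eE ve; subst e.
have only_vu f : f \in E -> v \in f -> f = [set v; u].
  by move=> fE vf; exact: deg1_uniq dv fE vf eE ve.
have vFl := bad_leaf_uncovered mL ml dv bad.
have vuFl : [set v; u] \notin Fl by apply: contra vFl => vuFl; apply/VofP; exists [set v; u].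
have /VofP[g gFl ug] := max_matching_cover sE ml eE vFl.
have gE := subsetP sFl g gFl.
have gvu : g != [set v; u] by apply: contraNneq vuFl => <-.
have dom : dominated E [set v; u] g.
  by apply: dominatedP ug _ => f fE fvu /(only_vu f fE) efvu; rewrite efvu eqxx in fvu.
have gFL : g \in FL.
  apply/negPn/negP => gFL; apply: (no_dominating_edge sE mL ml hLl eE vuFl gFl gFL _ dom).
  by apply/meetP; exists u; rewrite ?set22.
have vuFL : [set v; u] \notin FL.
  by apply/negP => vuFL; move/eqP: gvu; apply; exact: matching_edge_eq tFL gFL vuFL ug (set22 _ _).
set Fl' := [set v; u] |: (Fl :\ g).
have [ml' le'] := dominated_swap ml gFl eE vuFl (edge_neq0 sE eE) dom.
have el' : nu (E :\: Fl') = lnu E by apply/eqP; rewrite eqn_leq (lnu_le ml') -el le'.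
exists FL, Fl'; apply: (repairs_local (S := [set v; u] :|: g)) => //.
- rewrite /good in_setU in_setD; apply/orP; right; apply/andP; split.
    by apply/negP => /VofP[f fFL /(only_vu f (subsetP sFL f fFL))] efvu; rewrite -efvu fFL in vuFL.
  by apply/VofP; exists [set v; u]; rewrite ?setU11.
- move=> x xV1 xS; have [//|xv] := eqVneq x v.
  have xu : x != u.
    by apply: (contraTneq _ xV1) => ->; exact: (leaf_nbr_notin_V1 vc dv eE uv gE ug gvu).
  have xg : x \in g by move: xS; rewrite in_setU !inE (negPf xv) (negPf xu).
  have hLl' : nu (E :\: FL) = 2 * nu (E :\: Fl') by rewrite eL el' hL.
  have xFL : x \in Vof FL by apply/VofP; exists g.
  have /VofP[f] := V1_covered sE vc mL ml' hLl' xV1 xFL.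
  rewrite !inE => /orP[/eqP->|/andP[fg fFl] xf].
    by case/set2P => // exu; rewrite exu eqxx in xu.
  by rewrite (matching_edge_eq tFl fFl gFl xf xg) eqxx in fg.
- move=> x f; rewrite in_setU negb_or => /andP[xvu xg] xf; split => //.
  exact: swap_local xg xvu xf.
Qed.

Section TriangleRepair.
Variables (t : {set T}) (w b : T).
Hypotheses (tT : t \in Tri2 E) (et : t = [set ch t; w; b]) (dw : deg E w = 2)
  (pt : pendant_triangle E (ch t) w b).
Local Notation v := (ch t).
Local Notation S := [set ch t; w; b].

Lemma triangle_V1 : {in V1 E ch, forall x, x \in S -> x = v}.
Proof.
move=> x xV1; have [vw _ _ _ _] := pt; have wv : w != v by rewrite eq_sym.
rewrite !inE => /orP[/orP[/eqP//|/eqP exw]|/eqP exb].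
  by rewrite exw (negPf (Tri2_twin_notin_V1 vc tT et dw wv)) in xV1.
by rewrite exb (negPf (pendant_base_notin_V1 pt)) in xV1.
Qed.

Lemma triangle_swap_off F y z y' z' x e : y \in S -> z \in S -> y' \in S -> z' \in S ->
  x \notin S -> x \in e -> (e \in [set y'; z'] |: (F :\ [set y; z])) = (e \in F).
Proof.
by move=> yS zS y'S z'S; apply: swap_off; rewrite subUset !sub1set ?yS ?zS ?y'S ?z'S.
Qed.

Lemma triangle_repair_local FL Fl FL' Fl' : ~~ good FL Fl v -> optimal_pair FL' Fl' ->
  good FL' Fl' v -> agree_off S FL Fl FL' Fl' -> exists FL'' Fl'', repairs FL Fl v FL'' Fl''.
Proof. by move=> bad opt' gv agr; exists FL', Fl'; apply: repairs_local triangle_V1 agr. Qed.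

Lemma chosen_in_V1 : v \in V1 E ch.
Proof. by rewrite !inE imset_f ?orbT. Qed.

(* If Fl misses v_t then so does FL (Part (1)); both matchings then contain wb,
   and rotating wb to vb in both makes v_t covered by a common edge. *)
Lemma triangle_repair_uncovered FL Fl : optimal_pair FL Fl -> ~~ good FL Fl v ->
  v \notin Vof Fl -> exists FL' Fl', repairs FL Fl v FL' Fl'.
Proof.
move=> opt bad vFl; have [mL eL ml el] := opt.
have [_ _ _ [Evw _ _] [_ _ Hw]] := pt.
have vFL : v \notin Vof FL.
  by apply: contra vFl => /(V1_covered sE vc mL ml (optimal_pair_rigid opt) chosen_in_V1).
have wbIn F : max_matching E F -> v \notin Vof F -> [set w; b] \in F.
  move=> mF vF; have [sF _ _] := max_matchingP mF.
  have /VofP[h hF wh] := max_matching_cover sE mF Evw vF.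
  case: (Hw h (subsetP sF h hF) wh) => eh; rewrite eh in hF => //.
  by move/negP: vF; case; apply/VofP; exists [set w; v]; rewrite ?set22.
have ptw := pendant_triangle_sym pt.
have [mL' eL'] := pendant_rotate sE ptw mL (wbIn _ mL vFL).
have [ml' el'] := pendant_rotate sE ptw ml (wbIn _ ml vFl).
apply: (triangle_repair_local bad (And4 mL' (etrans eL' eL) ml' (etrans el' el))).
  rewrite /good in_setU; apply/orP; left; apply/VofP.
  by exists [set v; b]; rewrite ?set21 // inE !setU11.
by move=> x e xS xe; rewrite !(triangle_swap_off _ _ _ _ _ xS xe) // !inE eqxx ?orbT.
Qed.

(* If Fl covers v_t by vw while FL covers it by vb, rotating vb to wb in FL
   leaves v_t covered by Fl only; the reverse situation is impossible since vw
   would be dominated by the Fl-edge vb; in the remaining cases v_t is good. *)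
Lemma triangle_repair_covered FL Fl : optimal_pair FL Fl -> ~~ good FL Fl v ->
  v \in Vof Fl -> exists FL' Fl', repairs FL Fl v FL' Fl'.
Proof.
move=> opt bad vFl; have [mL eL ml el] := opt; have hLl := optimal_pair_rigid opt.
have [sFL tFL _] := max_matchingP mL; have [sFl tFl _] := max_matchingP ml.
have [vw vb wb [_ _ Hv] [Ewv _ _]] := pt; have wv : w != v by rewrite eq_sym.
have /VofP[fv fvFL vfv] : v \in Vof FL.
  by apply: contraNT bad => vFL; rewrite /good in_setU in_setD vFL vFl orbT.
have /VofP[ev evFl vev] := vFl.
have common f : f \in FL -> f \in Fl -> v \in f -> False.
  move=> fFL fFl vf; move/negP: bad; apply; rewrite /good in_setU.
  by apply/orP; left; apply/VofP; exists f; rewrite // inE fFL.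
have [efv|efv] := Hv fv (subsetP sFL fv fvFL) vfv; rewrite {fv}efv in fvFL vfv;
  have [eev|eev] := Hv ev (subsetP sFl ev evFl) vev; rewrite {ev}eev in evFl vev.
- by case: (common _ fvFL evFl vfv).
- have vwFl : [set v; w] \notin Fl.
    apply/negP => vwFl; move: (pair_neq wb wv).
    by rewrite (matching_edge_eq tFl vwFl evFl (set21 _ _) (set21 _ _)) eqxx.
  case: (no_dominating_edge_FL sE mL ml hLl fvFL vwFl evFl).
    by apply/meetP; exists v; rewrite ?set21.
  rewrite [[set v; w]]setUC.
  exact: (pendant_dominated sE (pendant_triangle_sym pt) Ewv (set21 _ _)).
- have [mL' eL'] := pendant_rotate sE pt mL fvFL.
  apply: (triangle_repair_local bad (And4 mL' (etrans eL' eL) ml el)).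
    rewrite /good in_setU in_setD; apply/orP; right; apply/andP; split => //.
    apply/negP => /VofP[f]; rewrite !inE => /orP[/eqP->|/andP[fvb fFL]] vf.
      by move: vf; rewrite !inE (negPf vw) (negPf vb).
    by rewrite (matching_edge_eq tFL fFL fvFL vf (set21 _ _)) eqxx in fvb.
  by move=> x e xS xe; rewrite (triangle_swap_off _ _ _ _ _ xS xe) // !inE eqxx ?orbT.
- by case: (common _ fvFL evFl vfv).
Qed.

End TriangleRepair.

Lemma triangle_repair FL Fl t : optimal_pair FL Fl -> t \in Tri2 E ->
  ~~ good FL Fl (ch t) -> exists FL' Fl', repairs FL Fl (ch t) FL' Fl'.
Proof.
move=> opt tT bad; have [w [b [et dw pt]]] := Tri2_shape vc tT.
have [vFl|vFl] := boolP (ch t \in Vof Fl).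
  exact: triangle_repair_covered tT et dw pt FL Fl opt bad vFl.
exact: triangle_repair_uncovered tT et dw pt FL Fl opt bad vFl.
Qed.

Lemma repair_step FL Fl v : optimal_pair FL Fl -> v \in V1 E ch -> ~~ good FL Fl v ->
  exists FL' Fl', repairs FL Fl v FL' Fl'.
Proof.
by move=> opt /V1_cases[dv|[t tT ->]]; [exact: leaf_repair | exact: triangle_repair].
Qed.

(* Part (2): since each repair strictly shrinks the set of bad vertices of V1,
   some optimal pair makes every vertex of V1 good. *)
Lemma all_good : exists FL Fl, optimal_pair FL Fl /\ {in V1 E ch, forall x, good FL Fl x}.
Proof.
pose bad FL Fl := [set x in V1 E ch | ~~ good FL Fl x].
have done FL Fl : optimal_pair FL Fl -> bad FL Fl = set0 ->
    exists FL' Fl', optimal_pair FL' Fl' /\ {in V1 E ch, forall x, good FL' Fl' x}.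
  move=> opt bad0; exists FL, Fl; split => // x xV1; apply/negPn/negP => bx.
  by have := in_set0 x; rewrite -bad0 inE xV1 bx.
suff IH n FL Fl : optimal_pair FL Fl -> #|bad FL Fl| <= n ->
    exists FL' Fl', optimal_pair FL' Fl' /\ {in V1 E ch, forall x, good FL' Fl' x}.
  by have [FL [Fl opt]] := optimal_pair_exists; exact: IH opt (leqnn _).
elim: n FL Fl => [|n IHn] FL Fl opt hn;
  have [bad0|/set0Pn[v vbad]] := eqVneq (bad FL Fl) set0; try exact: done opt bad0.
  by move: hn; rewrite leqn0 cards_eq0 => /eqP bad0; rewrite bad0 inE in vbad.
move: (vbad); rewrite in_set => /andP[vV1 bv].
have [FL' [Fl' [opt' gv keep]]] := repair_step opt vV1 bv.
apply: IHn opt' _; rewrite -ltnS; apply: leq_trans hn; apply: proper_card.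
apply/properP; split; last by exists v; rewrite // inE gv andbF.
apply/subsetP => x; rewrite [x \in bad FL' _]in_set [x \in bad FL _]in_set => /andP[xV1 bx].
by rewrite xV1 (contra (keep x xV1) bx).
Qed.

End Extremal.

Theorem claim5 (T : finType) (E : {set {set T}}) (ch : {set T} -> T) :
  simple_graph E -> connected E -> 3 <= #|T| ->
  Lnu E = 2 * lnu E ->
  valid_choice E ch ->
  (forall FL Fl : {set {set T}},
      max_matching E FL -> nu (E :\: FL) = Lnu E ->
      max_matching E Fl -> nu (E :\: Fl) = lnu E ->
      (Vof FL :\: Vof Fl) :&: V1 E ch = set0) /\
  (exists Fl FL : {set {set T}},
      [/\ max_matching E Fl, nu (E :\: Fl) = lnu E,
          max_matching E FL, nu (E :\: FL) = Lnu E &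
          V1 E ch \subset Vof (FL :&: Fl) :|: (Vof Fl :\: Vof FL)]).
Proof.
move=> sE conn _ hL vc; split.
  move=> FL Fl mL eL ml el; apply/setP => x; rewrite in_setI in_setD in_set0.
  apply/negP => /andP[/andP[xFl xFL] xV1].
  have hLl : nu (E :\: FL) = 2 * nu (E :\: Fl) by rewrite eL el.
  by rewrite (V1_covered sE vc mL ml hLl xV1 xFL) in xFl.
have [FL [Fl [[mL eL ml el] allg]]] := all_good sE vc conn hL.
by exists Fl, FL; split => //; apply/subsetP => x /allg.
Qed.
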